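(* Consider the multi-agent system $\dot x_i(t)=u_i(t)$, $i=1,\dots,N$, $x_i\in\mathbb{R}$, with input, for $t\in[t_k,t_{k+1})$, $u_i(t)=0$ if $t_k\in\Xi(0,+\infty)$ and $u_i(t)=\sum_{j=1}^N a_{ij}(x_j(t_k)-x_i(t_k))$ if $t_k\in\Theta(0,+\infty)$, where the Laplacian $\mathscr{L}$ is symmetric and irreducible, $t_1=0$, $\Delta_k:=t_{k+1}-t_k$, and $\xi$ is a DoS sequence that is not an edge case. Suppose there exist finite constants $\check t\geqslant 0$, $\underline{\Delta}$, $\bar\Delta$ such that $0<\underline{\Delta}\leqslant\Delta_k<+\infty$ for all $t_k\geqslant 0$ and $\Delta_k\leqslant\bar\Delta$ for all $t_k\geqslant\check t$, where $\lvert 1-\bar\Delta\lambda_N(\mathscr{L})\rvert<1$ and $B_d+B_f\bar\Delta<1$ for some duration-bound $B_d$ and frequency-bound $B_f$ of $\xi$. Then the system reaches average consensus: $\lim_{t\to+\infty}\big(x_i(t)-\frac1N\sum_{j=1}^Nx_j(0)\big)=0$ for all $i$.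
   Context: A DoS sequence $\xi=\{H_n\}$ is a finite or infinite sequence of sets $H_n := \{h_n\}\cup[h_n,h_n+\tau_n)$, where $h_1\geqslant 0$, $\tau_n\geqslant 0$ and $h_{n+1} > h_n+\tau_n$ for all $n$. For $0\leqslant \tau\leqslant s$ let $\Xi(\tau,s) := \bigcup_n H_n\cap[\tau,s]$, $\Theta(\tau,s):=[\tau,s]\setminus\Xi(\tau,s)$, $n_\xi(\tau,s) := \operatorname{card}(\{h_n\}_n\cap[\tau,s])$; $\Xi(0,+\infty)=\bigcup_nH_n$, $\Theta(0,+\infty)=[0,+\infty)\setminus\Xi(0,+\infty)$; $\lvert\cdot\rvert$ is Lebesgue measure. A constant $B_d\in[0,1]$ is a duration-bound of $\xi$ if there is $0<\kappa<+\infty$ with $\lvert \Xi(0,t)\rvert\leqslant \kappa + B_d t$ for all $t\geqslant 0$. A constant $B_f\in[0,+\infty)$ is a frequency-bound of $\xi$ if there is an integer $0<\Lambda<+\infty$ with $n_\xi(0,t)\leqslant \Lambda + B_f t$ for all $t\geqslant 0$; if no such finite $B_f$ exists, the frequency-bound is $+\infty$. $\mathcal{D}(\xi)$, $\mathcal{F}(\xi)$ are the sets of duration- and frequency-bounds. $\xi$ is an edge case if (i) $\inf\mathcal{D}(\xi)=1$, or (ii) $\inf\mathcal{F}(\xi)=+\infty$, or (iii) for every $\Gamma>0$ there is $n$ with $\tau_n>\Gamma$. Network: $a_{ij}\in\{0,1\}$, $a_{ij}=1$ iff agents $i,j$ are connected; Laplacian $\mathscr{L}=(l_{ij})$ with $l_{ij}=-a_{ij}$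 ($i\neq j$), $l_{ii}=\sum_{j\neq i}a_{ij}$; its eigenvalues are $0=\lambda_1(\mathscr{L})<\lambda_2(\mathscr{L})\leqslant\cdots\leqslant\lambda_N(\mathscr{L})$. *)

From HB Require Import structures.
From mathcomp Require Import all_boot all_order all_algebra.
From mathcomp Require Import all_classical all_reals all_analysis.
Set Implicit Arguments. Unset Strict Implicit. Unset Printing Implicit Defensive.
Import Order.TTheory GRing.Theory Num.Theory.
Import numFieldNormedType.Exports.
Local Open Scope classical_set_scope.
Local Open Scope ring_scope.

Section DefsSec.
Variable R : realType.

(* A DoS sequence is given by (K, h, tau): K = Some m means the sequence has
   exactly m elements (indices 0..m-1), K = None means it is infinite.
   Indexing starts at 0 (the paper's H_1 is our index 0). *)
Definition in_seq (K : option nat) (n : nat) : bool :=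
  if K is Some m then (n < m)%N else true.

Definition DoS_seq (K : option nat) (h tau : nat -> R) : Prop :=
  (in_seq K 0 -> 0 <= h 0%N) /\
  (forall n, in_seq K n -> 0 <= tau n) /\
  (forall n, in_seq K n.+1 -> h n + tau n < h n.+1).

Definition H_set (h tau : nat -> R) (n : nat) : set R :=
  [set t | t = h n \/ (h n <= t /\ t < h n + tau n)].

Definition Xi_all (K : option nat) (h tau : nat -> R) : set R :=
  \bigcup_(n in [set n | in_seq K n]) H_set h tau n.

Definition Xi (K : option nat) (h tau : nat -> R) (a b : R) : set R :=
  Xi_all K h tau `&` `[a, b].

Definition Theta_all (K : option nat) (h tau : nat -> R) : set R :=
  `[0, +oo[ `\` Xi_all K h tau.

Definition pulse_times (K : option nat) (h : nat -> R) : set R :=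
  [set h n | n in [set n | in_seq K n]].

(* card(A) <= c, for a possibly infinite set A of reals *)
Definition card_le (A : set R) (c : R) : Prop :=
  forall s : seq R, uniq s -> (forall y, y \in s -> A y) -> (size s)%:R <= c.

Definition duration_bound (K : option nat) (h tau : nat -> R) (Bd : R) : Prop :=
  0 <= Bd <= 1 /\
  exists kappa : R, 0 < kappa /\
    forall t : R, 0 <= t ->
      (lebesgue_measure (Xi K h tau 0 t) <= (kappa + Bd * t)%:E)%E.

Definition duration_bounds (K : option nat) (h tau : nat -> R) : set R :=
  [set Bd | duration_bound K h tau Bd].

Definition frequency_bound (K : option nat) (h : nat -> R) (Bf : R) : Prop :=
  0 <= Bf /\
  exists Lambda : nat, (0 < Lambda)%N /\
    forall t : R, 0 <= t ->
      card_le (pulse_times K h `&` `[0, t]) (Lambda%:R + Bf * t).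

Definition frequency_bounds (K : option nat) (h : nat -> R) : set (\bar R) :=
  [set y | exists2 b, frequency_bound K h b & y = b%:E] `|`
  [set y | y = +oo%E /\ ~ (exists b, frequency_bound K h b)].

Definition edge_case (K : option nat) (h tau : nat -> R) : Prop :=
  inf (duration_bounds K h tau) = 1 \/
  ereal_inf (frequency_bounds K h) = +oo%E \/
  (forall Gamma : R, 0 < Gamma -> exists n, in_seq K n /\ Gamma < tau n).

Definition laplacian (N : nat) (a : 'M[R]_N) : 'M[R]_N :=
  \matrix_(i, j) if i == j then \sum_(k | k != i) a i k else - a i j.

(* irreducible matrix: not permutation-similar to a block upper triangular
   matrix, i.e. there is no nonempty proper index set S with A i j = 0 for
   all i in S, j not in S *)
Definition irreducible_mx (N : nat) (A : 'M[R]_N) : Prop :=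
  forall S : {set 'I_N}, S != finset.set0 -> S != finset.setT ->
    exists i j, [/\ i \in S, j \notin S & A i j != 0].

Definition max_eigenvalue (N : nat) (A : 'M[R]_N) (lamN : R) : Prop :=
  eigenvalue A lamN /\ (forall mu, eigenvalue A mu -> mu <= lamN).

(* control input on [t_k, t_{k+1}), evaluated with the sample time s = t_k *)
Definition ctrl_input (N : nat) (a : 'M[R]_N) (K : option nat) (h tau : nat -> R)
    (x : 'I_N -> R -> R) (s : R) (i : 'I_N) : R :=
  if `[< Xi_all K h tau s >] then 0
  else \sum_(j < N) a i j * (x j s - x i s).

End DefsSec.

(* Let e_k be the deviation of the state at the k-th sampling instant from the
   initial average.  The average is invariant, and e_{k+1} = e_k - d_k e_k L, where
   d_k = 0 if t_k is attacked and d_k = t_{k+1} - t_k otherwise.  Since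
   |v L|^2 <= lambda_N v L v^T, an unattacked step taken after tcheck decreases
   |e_k|^2 by at least Dlow (2 - Dbar lambda_N) e_k L e_k^T, while an attacked step
   leaves e_k unchanged.  If all sampling instants from some T on were attacked, then
   [T, t] would be covered by the attacks and by windows of length Dbar before each
   pulse, giving t - T <= kappa + (Bd + Bf Dbar) t + O(1), which contradicts
   Bd + Bf Dbar < 1 for large t.  So unattacked samples recur, the Laplacian energy
   e_k L e_k^T tends to 0, and irreducibility together with sum_j e_k j = 0 yields
   e_k -> 0.  Between samples each state is affine in time, hence stays between its
   values at consecutive samples. *)

From Pilot Require Import Defs.
From HB Require Import structures.
From mathcomp Require Import all_boot all_order all_algebra.
From mathcomp Require Import all_classical all_reals all_analysis.
From mathcomp Require Import ring lra.
Import Order.TTheory GRing.Theory Num.Theory.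
Import numFieldNormedType.Exports.
Local Open Scope classical_set_scope.
Local Open Scope ring_scope.
Set Implicit Arguments. Unset Strict Implicit. Unset Printing Implicit Defensive.

(** * Quadratic forms on real row vectors *)

Notation qform S v := (form idfun S v v).
Notation sqnorm v := (form idfun 1%:M v v).

Section QuadraticForm.
Variables (R : realType) (n : nat).
Implicit Types (S T : 'M[R]_n) (u v w : 'rV[R]_n).

Lemma formE S u v : form idfun S u v = (u *m S *m v^T) 0 0.
Proof. by rewrite /form map_mx_id. Qed.

Lemma form_sym S u v : S^T = S -> form idfun S u v = form idfun S v u.
Proof.
move=> St; rewrite !formE -[in LHS](trmxK (u *m S *m v^T)) mxE.
by rewrite !trmx_mul trmxK St mulmxA.
Qed.

Lemma formBl S u v w : form idfun S (u - v) w = form idfun S u w - form idfun S v w.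
Proof. by rewrite formDl formNl. Qed.

Lemma formBr S u v w : form idfun S u (v - w) = form idfun S u v - form idfun S u w.
Proof. by rewrite formDr formNr. Qed.

Lemma formDm S T u v : form idfun (S + T) u v = form idfun S u v + form idfun T u v.
Proof. by rewrite !formE mulmxDr mulmxDl mxE. Qed.

Lemma formZm k S u v : form idfun (k *: S) u v = k * form idfun S u v.
Proof. by rewrite !formE -scalemxAr -scalemxAl mxE. Qed.

Lemma formBm S T u v : form idfun (S - T) u v = form idfun S u v - form idfun T u v.
Proof. by rewrite formDm -scaleN1r formZm mulN1r. Qed.

Lemma form1_mulmx S u v : form idfun 1%:M (u *m S) v = form idfun S u v.
Proof. by rewrite !formE mulmx1. Qed.

Lemma sqnormE v : sqnorm v = \sum_i v 0 i ^+ 2.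
Proof. by rewrite formE mulmx1 mxE; apply: eq_bigr => i _; rewrite !mxE expr2. Qed.

Lemma sqnorm_ge0 v : 0 <= sqnorm v.
Proof. by rewrite sqnormE sumr_ge0 // => i _; rewrite sqr_ge0. Qed.

Lemma sqnorm_eq0 v : (sqnorm v == 0) = (v == 0).
Proof.
apply/idP/eqP => [|->]; last by rewrite form0l.
rewrite sqnormE psumr_eq0 => [/allP v0|i _]; last by rewrite sqr_ge0.
apply/rowP => i; rewrite mxE; apply/eqP; rewrite -sqrf_eq0.
exact: (implyP (v0 i (mem_index_enum _))).
Qed.

Lemma sqnorm_gt0 v : (0 < sqnorm v) = (v != 0).
Proof. by rewrite lt_def sqnorm_eq0 sqnorm_ge0 andbT. Qed.

Lemma sqnorm_normalize v : v != 0 -> sqnorm ((Num.sqrt (sqnorm v))^-1 *: v) = 1.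
Proof.
rewrite -sqnorm_gt0 => v0; rewrite formZl formZr /= mulrA -expr2 exprVn.
by rewrite sqr_sqrtr ?ltW // mulVf // gt_eqF.
Qed.

Lemma qform_continuous S : continuous (fun v => qform S v).
Proof.
have -> : (fun v => qform S v) = (fun v => \sum_i v 0 i * \sum_j S i j * v 0 j).
  apply: funext => v; rewrite formE -mulmxA mxE; apply: eq_bigr => i _.
  by rewrite !mxE; congr (_ * _); apply: eq_bigr => j _; rewrite !mxE.
apply: (@continuous_big R _ +%R 0 xpredT add_continuous _ (index_enum _)) => i _ v.
apply: continuousM; first exact: coord_continuous.
apply: (@continuous_big R _ +%R 0 xpredT add_continuous _ (index_enum _)) => j _ w.
by apply: continuousM; [exact: cst_continuous|exact: coord_continuous].
Qed.

Lemma compact_unit_sphere : compact [set v : 'rV[R]_n | sqnorm v = 1].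
Proof.
apply: bounded_closed_compact.
  exists 1; split => // M M1 v /= v1; rewrite /Num.norm /= mx_normrE.
  apply: bigmax_le => [|[i j] _ /=]; first by rewrite ltW // (lt_trans _ M1).
  apply: le_trans (ltW M1); rewrite -(@ler_pXn2r _ 2) // ?nnegrE // expr1n.
  rewrite real_normK ?num_real // -v1 sqnormE ord1 (bigD1 j) //= lerDl.
  by rewrite sumr_ge0 // => k _; rewrite sqr_ge0.
have -> : [set v : 'rV[R]_n | sqnorm v = 1] = (fun v => sqnorm v) @^-1` [set 1] by [].
by apply: preimage_closed => [v _|]; [exact: qform_continuous|exact: closed_eq].
Qed.

(* [c] maximises [qform S], so the first-order term in [t] of
   [qform S (c + t *: c *m S)] vanishes. *)
Lemma form_le0_kernel S c : S^T = S -> (forall v, qform S v <= 0) ->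
  qform S c = 0 -> c *m S = 0.
Proof.
move=> St nsd c0; apply/eqP; rewrite -sqnorm_eq0 form1_mulmx.
set w := c *m S; set b : R := form idfun S c w; set C : R := qform S w.
have quad t : 2 * b * t + C * t ^+ 2 <= 0.
  have := nsd (c + t *: w); rewrite !(formDl, formDr, formZl, formZr) /=.
  by rewrite -(form_sym c w St) c0 -/b -/C; lra.
set d : R := `|C| + 1; have d0 : 0 < d by rewrite ltr_wpDl.
have := quad (b / d); have -> : 2 * b * (b / d) + C * (b / d) ^+ 2 =
    (b / d) ^+ 2 * (2 * d + C) by rewrite /d; field; rewrite gt_eqF.
have pos : 0 < 2 * d + C.
  by have := ler_norm (- C); have := normr_ge0 C; rewrite normrN /d; lra.
rewrite pmulr_lle0 // => bd_le0.
have /eqP : (b / d) ^+ 2 = 0 by apply/le_anti; rewrite bd_le0 sqr_ge0.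
by rewrite sqrf_eq0 mulf_eq0 invr_eq0 (gt_eqF d0) orbF.
Qed.

(* The maximum [m] of [qform S] on the unit sphere is an eigenvalue: it is attained
   at a kernel vector of the nonpositive form [S - m%:M]. *)
Lemma form_le0_of_eigenvalues S : S^T = S ->
  (forall mu, eigenvalue S mu -> mu <= 0) -> forall v, qform S v <= 0.
Proof.
move=> St ev_le0 v; rewrite leNgt; apply/negP => Sv_gt0.
have v0 : v != 0 by apply: contraTneq Sv_gt0 => ->; rewrite form0l ltxx.
set A := [set v : 'rV[R]_n | sqnorm v = 1].
have [c /set_mem c1 cmax] : exists2 c, c \in A & forall u, u \in A -> qform S u <= qform S c.
  apply: EVT_max_rV; [by eexists; apply: sqnorm_normalize v0|
    exact: compact_unit_sphere|exact/continuous_subspaceT/qform_continuous].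
set m := qform S c.
have c0 : c != 0 by apply: contra_eqN c1 => /eqP ->; rewrite form0l eq_sym oner_eq0.
have le_m u : qform S u <= m * sqnorm u.
  have [->|u0] := eqVneq u 0; first by rewrite !form0l mulr0.
  have := cmax _ (mem_set (sqnorm_normalize u0)).
  rewrite formZl formZr /= mulrA -expr2 exprVn sqr_sqrtr ?sqnorm_ge0 //.
  by rewrite ler_pdivrMl ?sqnorm_gt0 // mulrC.
have m_gt0 : 0 < m.
  apply: lt_le_trans (cmax _ (mem_set (sqnorm_normalize v0))).
  by rewrite formZl formZr /= !mulr_gt0 // invr_gt0 sqrtr_gt0 sqnorm_gt0.
have /form_le0_kernel cS : (S - m%:M)^T = S - m%:M by rewrite linearB /= St tr_scalar_mx.
have : eigenvalue S m.
  apply/eigenvalueP; exists c => //; apply/eqP; rewrite -subr_eq0 -mul_mx_scalar -mulmxBr.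
  apply/eqP/cS => [u|]; rewrite -scalemx1 formBm formZm ?c1; last by rewrite mulr1 subrr.
  by rewrite subr_le0.
by move/ev_le0; rewrite leNgt m_gt0.
Qed.

End QuadraticForm.

(** * Graph Laplacians *)

Lemma eigenvalue_quadratic (F : fieldType) n (A : 'M[F]_n) lam nu r1 r2 :
  r1 + r2 = lam -> r1 * r2 = - nu ->
  eigenvalue (A *m A - lam *: A) nu -> eigenvalue A r1 \/ eigenvalue A r2.
Proof.
move=> sum_r prod_r /eigenvalueP [w Hw w0].
have [z0|z0] := eqVneq (w *m A - r2 *: w) 0.
  by right; apply/eigenvalueP; exists w => //; apply/eqP; rewrite -subr_eq0 z0.
left; apply/eigenvalueP; exists (w *m A - r2 *: w) => //.
rewrite mulmxBl -scalemxAl -mulmxA.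
have -> : w *m (A *m A) = nu *: w + lam *: (w *m A).
  by rewrite -Hw mulmxBr -scalemxAr addrNK.
by rewrite -sum_r -[nu]opprK -prod_r scalerDl addrA addrK scalerBr scalerA scaleNr addrC.
Qed.

Lemma laplacian_sym_adj (R : realType) N (a : 'M[R]_N) :
  (laplacian a)^T = laplacian a -> forall i j, a i j = a j i.
Proof.
move=> Lsym i j; have [->//|ij] := eqVneq i j.
have /matrixP/(_ j i) := Lsym; rewrite !mxE [j == i]eq_sym (negbTE ij).
by move/oppr_inj.
Qed.

Section Laplacian.
Variables (R : realType) (N : nat) (a : 'M[R]_N).
Hypotheses (a_sym : forall i j, a i j = a j i) (a_ge0 : forall i j, 0 <= a i j).
Local Notation L := (laplacian a).
Implicit Types v : 'rV[R]_N.

Lemma laplacian_trmx : L^T = L.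
Proof.
apply/matrixP => i j; rewrite !mxE [j == i]eq_sym.
by case: eqP => [->|_] //; rewrite a_sym.
Qed.

Lemma mulmx_laplacian v i : (v *m L) 0 i = \sum_j a i j * (v 0 i - v 0 j).
Proof.
rewrite mxE (bigD1 i) //= [in RHS](bigD1 i) //= subrr mulr0 add0r !mxE eqxx.
rewrite mulr_sumr -big_split /=; apply: eq_bigr => j ji.
by rewrite !mxE (negbTE ji) a_sym; ring.
Qed.

Lemma sum_mulmx_laplacian v : \sum_i (v *m L) 0 i = 0.
Proof.
have : 2 * \sum_i (v *m L) 0 i = 0.
  rewrite mulr2n mulrDl mul1r {1}(eq_bigr _ (fun i _ => mulmx_laplacian v i)).
  rewrite exchange_big -big_split big1 // => i _.
  by rewrite mulmx_laplacian -big_split big1 //= => j _; rewrite a_sym; ring.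
by move/eqP; rewrite mulf_eq0 pnatr_eq0 => /eqP.
Qed.

Lemma laplacian_form v : 2 * qform L v = \sum_i \sum_j a i j * (v 0 i - v 0 j) ^+ 2.
Proof.
have qE : qform L v = \sum_i \sum_j a i j * (v 0 i - v 0 j) * v 0 i.
  rewrite formE mxE; apply: eq_bigr => i _.
  by rewrite [v^T _ _]mxE mulmx_laplacian mulr_suml.
rewrite mulr2n mulrDl mul1r {1}qE exchange_big qE -big_split /=; apply: eq_bigr => i _.
by rewrite -big_split /=; apply: eq_bigr => j _; rewrite a_sym; ring.
Qed.

Lemma laplacian_form_ge0 v : 0 <= qform L v.
Proof.
rewrite -(pmulr_rge0 _ (ltr0n _ 2)) laplacian_form.
by do 2!(apply: sumr_ge0 => ? _); rewrite mulr_ge0 ?sqr_ge0.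
Qed.

Lemma laplacian_form_edge v i j : a i j * (v 0 i - v 0 j) ^+ 2 <= 2 * qform L v.
Proof.
have term_ge0 k l : 0 <= a k l * (v 0 k - v 0 l) ^+ 2 by rewrite mulr_ge0 ?sqr_ge0.
rewrite laplacian_form (bigD1 i) //= (bigD1 j) //= -addrA lerDl.
by rewrite addr_ge0 ?sumr_ge0 // => k _; rewrite sumr_ge0.
Qed.

Lemma laplacian_eigenvalue_ge0 mu : eigenvalue L mu -> 0 <= mu.
Proof.
move=> /eigenvalueP [w Hw w0]; have := laplacian_form_ge0 w.
by rewrite -form1_mulmx Hw formZl pmulr_lge0 // sqnorm_gt0.
Qed.

(* An eigenvalue [nu > 0] of [L *m L - lam *: L] would give [L] an eigenvalue among
   the roots [(lam +- sqrt (lam ^+ 2 + 4 nu)) / 2], one above [lam], one negative. *)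
Lemma sqnorm_laplacian_le lam v :
  max_eigenvalue L lam -> sqnorm (v *m L) <= lam * qform L v.
Proof.
move=> [_ lam_max].
have -> : sqnorm (v *m L) = qform (L *m L) v.
  by rewrite !formE mulmx1 trmx_mul laplacian_trmx !mulmxA.
rewrite -subr_le0 -formZm -formBm; apply: form_le0_of_eigenvalues.
  by rewrite linearB /= linearZ /= trmx_mul laplacian_trmx.
move=> nu ev; rewrite leNgt; apply/negP => nu_gt0.
pose s := Num.sqrt (lam ^+ 2 + 4 * nu).
have s2 : s ^+ 2 = lam ^+ 2 + 4 * nu by rewrite sqr_sqrtr // addr_ge0 ?sqr_ge0 ?mulr_ge0 ?ltW.
have lam_s : lam < s by have := sqrtr_ge0 (lam ^+ 2 + 4 * nu); rewrite -/s; nra.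
have [] := eigenvalue_quadratic (r1 := (lam + s) / 2) (r2 := (lam - s) / 2) _ _ ev.
- by field.
- have -> : nu = (s ^+ 2 - lam ^+ 2) / 4 by rewrite s2; field.
  by field.
- by move/lam_max; lra.
- by move/laplacian_eigenvalue_ge0; lra.
Qed.
Lemma sqnorm_laplacian_step lam d v : max_eigenvalue L lam ->
  sqnorm (v - d *: (v *m L)) <= sqnorm v - d * (2 - d * lam) * qform L v.
Proof.
move=> lam_max; have LL := sqnorm_laplacian_le v lam_max.
have vvL : form idfun 1%:M v (v *m L) = qform L v.
  by rewrite !formE mulmx1 trmx_mul laplacian_trmx mulmxA.
rewrite !(formBl, formBr, formZl, formZr) /= form1_mulmx vvL.
by have := ler_wpM2l (sqr_ge0 d) LL; lra.
Qed.

End Laplacian.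

Section LaplacianConsensus.
Variables (R : realType) (N : nat) (a : 'M[R]_N) (v : nat -> 'rV[R]_N).
Hypotheses (a_sym : forall i j, a i j = a j i) (a_ge0 : forall i j, 0 <= a i j).
Hypothesis a_irr : irreducible_mx (laplacian a).
Hypothesis v_sum0 : forall k, \sum_j v k 0 j = 0.
Hypothesis v_form0 : qform (laplacian a) (v k) @[k --> \oo] --> 0.

Lemma laplacian_edge_cvg0 i j : a i j != 0 -> v k 0 i - v k 0 j @[k --> \oo] --> 0.
Proof.
move=> aij; have aij_gt0 : 0 < a i j by rewrite lt_def aij a_ge0.
apply/cvgr0Pnorm_le => e e_gt0.
have aee : 0 < a i j * e ^+ 2 / 2 by rewrite !mulr_gt0 // exprn_gt0.
near=> k.
have small : `|qform (laplacian a) (v k)| <= a i j * e ^+ 2 / 2.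
  by near: k; exact: (cvgr0_norm_le _ v_form0 _ aee).
have := laplacian_form_edge a_sym a_ge0 (v k) i j.
move: small; rewrite ger0_norm ?laplacian_form_ge0 // => small edge.
rewrite -(ler_pXn2r (_ : 0 < 2)%N) ?nnegrE ?normr_ge0 ?(ltW e_gt0) // real_normK ?num_real //.
by rewrite -(ler_pM2l aij_gt0); lra.
Unshelve. all: by end_near.
Qed.

(* The agents whose gap to [i] vanishes form a set closed under the edges of the
   graph, hence all agents by irreducibility. *)
Lemma laplacian_diff_cvg0 i j : v k 0 j - v k 0 i @[k --> \oo] --> 0.
Proof.
pose S := [set j | `[< v k 0 j - v k 0 i @[k --> \oo] --> 0 >]]%SET.
suff /setP/(_ j) : S = [set: 'I_N]%SET by rewrite !inE => /asboolP.
apply/eqP; apply: contraT => S_proper.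
have /a_irr-/(_ S_proper)[j1 [j2 [j1S j2S]]] : S != finset.set0.
  apply/set0Pn; exists i; rewrite inE; apply/asboolP.
  by under eq_fun do rewrite subrr; exact: cvg_cst.
have j12 : j1 != j2 by apply: contraNneq j2S => <-.
rewrite mxE (negbTE j12) oppr_eq0 => /laplacian_edge_cvg0 edge.
move: j1S j2S; rewrite !inE => /asboolP j1i /negP[].
apply/asboolP.
have -> : (fun k => v k 0 j2 - v k 0 i) =
    (fun k => v k 0 j1 - v k 0 i) \- (fun k => v k 0 j1 - v k 0 j2).
  by apply/funext => k /=; ring.
by rewrite -[X in _ --> X](subr0 (0 : R)); exact: cvgB (asboolW j1i) edge.
Qed.

Lemma laplacian_consensus_cvg0 i : v k 0 i @[k --> \oo] --> 0.
Proof.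
have N_gt0 : (0 < N)%N := leq_ltn_trans (leq0n _) (ltn_ord i).
have -> : (fun k => v k 0 i) = (fun k => - N%:R^-1 * \sum_j (v k 0 j - v k 0 i)).
  apply/funext => k; rewrite sumrB v_sum0 sumr_const card_ord -mulr_natr.
  by field; rewrite pnatr_eq0 -lt0n.
rewrite -[X in _ --> X](mulr0 (- N%:R^-1)); apply: cvgM; first exact: cvg_cst.
rewrite -[X in _ --> X](@big1 R 0 +%R 'I_N (index_enum 'I_N) xpredT (fun=> 0)) //.
by apply: (cvg_big add_continuous) => // j _; exact: laplacian_diff_cvg0.
Qed.

End LaplacianConsensus.

(** * Lyapunov descent at recurrent instants *)

Section IntermittentDescent.
Variables (R : realType) (V Q : nat -> R) (act : nat -> Prop) (k1 : nat) (gam : R).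
Hypotheses (gam_gt0 : 0 < gam) (V_ge0 : forall k, 0 <= V k) (Q_ge0 : forall k, 0 <= Q k).
Hypothesis V_act : forall k, (k1 <= k)%N -> act k -> V k.+1 <= V k - gam * Q k.
Hypothesis VQ_idle : forall k, (k1 <= k)%N -> ~ act k -> V k.+1 = V k /\ Q k.+1 = Q k.
Hypothesis act_inf : forall n, exists2 k, (n <= k)%N & act k.

Lemma descent_nonincr k l : (k1 <= k <= l)%N -> V l <= V k.
Proof.
case/andP=> k1k; elim: l => [|l IH]; first by rewrite leqn0 => /eqP ->.
rewrite leq_eqVlt ltnS => /orP[/eqP -> //|kl].
apply: le_trans (IH kl); have k1l := leq_trans k1k kl.
have [/(V_act k1l) decr|/(VQ_idle k1l)[-> _] //] := pselect (act l).
by apply: le_trans decr _; rewrite gerBl mulr_ge0 // ltW.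
Qed.

Lemma next_active k : (k1 <= k)%N ->
  exists k', [/\ (k <= k')%N, act k', V k' = V k & Q k' = Q k].
Proof.
move=> k1k; have [k2 kk2] := act_inf k; rewrite -(subnKC kk2); move: (k2 - k)%N => d.
elim: d k k1k {k2 kk2} => [|d IH] k k1k; first by rewrite addn0; exists k.
rewrite -addSnnS => act_kd.
have [act_k|idle_k] := pselect (act k); first by exists k.
have [Vk Qk] := VQ_idle k1k idle_k.
have [k' [kk' ? ? ?]] := IH k.+1 (leqW k1k) act_kd.
by exists k'; split; rewrite -?Vk -?Qk // ltnW.
Qed.

Lemma descent_cvg0 : Q k @[k --> \oo] --> 0.
Proof.
apply/cvgrPdist_le => e e_gt0; apply: contrapT => Q_big.
(* Whenever [Q] exceeds [e], the next active step lowers [V] by at least [gam * e]. *)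
have dec m : exists2 k, (k1 <= k)%N & V k <= V k1 - m%:R * (gam * e).
  elim: m => [|m [k k1k Vk]]; first by exists k1; rewrite ?mul0r ?subr0.
  have [k2 kk2 Qk2] : exists2 k2, (k <= k2)%N & e < Q k2.
    apply: contrapT => small; apply: Q_big; exists k => // j /= kj.
    by rewrite sub0r normrN ger0_norm // leNgt; apply/negP => ej; apply: small; exists j.
  have [k3 [k2k3 act_k3 Vk3 Qk3]] := next_active (leq_trans k1k kk2).
  have k1k3 : (k1 <= k3)%N by rewrite (leq_trans k1k) // (leq_trans kk2).
  exists k3.+1; first exact: leqW.
  have Vk2 : V k2 <= V k by apply: descent_nonincr; rewrite k1k kk2.
  have := V_act k1k3 act_k3; rewrite Vk3 Qk3 -natr1.
  have : gam * e <= gam * Q k2 by rewrite ler_pM2l // ltW.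
  lra.
have gam_e : 0 < gam * e by rewrite mulr_gt0.
have [k _] := dec (Num.truncn (V k1 / (gam * e))).+1.
have := truncnS_gt (V k1 / (gam * e)); rewrite ltr_pdivrMr // => big.
by have := V_ge0 k; lra.
Qed.

End IntermittentDescent.

(** * Sampling instants and denial-of-service sequences *)

Section SamplingTimes.
Variables (R : realType) (ts : nat -> R) (Dlow : R).
Hypotheses (Dlow_gt0 : 0 < Dlow) (ts_step : forall k, Dlow <= ts k.+1 - ts k).

Lemma ts_lt k : ts k < ts k.+1.
Proof. by have := ts_step k; have := Dlow_gt0; lra. Qed.

Lemma ts_nondecr : {homo ts : k l / (k <= l)%N >-> k <= l}.
Proof. by apply/nondecreasing_seqP => k; exact/ltW/ts_lt. Qed.

Lemma ts_unbounded T : exists k, T < ts k.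
Proof.
have ts_lb k : ts 0 + k%:R * Dlow <= ts k.
  elim: k => [|k IH]; first by rewrite mul0r addr0.
  by have := ts_step k; rewrite -natr1 mulrDl mul1r; lra.
pose k := (Num.truncn ((`|T| + `|ts 0|) / Dlow)).+1; exists k.
have : `|T| + `|ts 0| < k%:R * Dlow by rewrite -ltr_pdivrMr // truncnS_gt.
by have := ts_lb k; have := ler_norm T; have := ler_norm (- ts 0); rewrite normrN; lra.
Qed.

Lemma ts_bracket s : ts 0 <= s -> exists k, ts k <= s < ts k.+1.
Proof.
move=> s0; have [m sm] := ts_unbounded s.
elim: m sm => [|m IH] sm; first by move: s0; rewrite leNgt sm.
by have [/IH//|tms] := ltP s (ts m); exists m; rewrite tms sm.
Qed.

End SamplingTimes.

Definition pulse_windows (R : realType) (h : nat -> R) (D : R) (M : nat) : set R :=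
  \big[setU/set0]_(m < M) `[h m - D, h m[%classic.

Lemma measure_pulse_windows (R : realType) (h : nat -> R) D M : 0 <= D ->
  (lebesgue_measure (pulse_windows h D M) <= (M%:R * D)%:E)%E.
Proof.
move=> D0; rewrite /pulse_windows.
have := Boole_inequality lebesgue_measure (A := fun m => `[h m - D, h m[%classic) (n := M)
  (fun m _ => measurable_itv _).
move/le_trans; apply.
have window m : (lebesgue_measure (`[(h m - D)%R, h m[%classic : set R) <= D%:E)%E.
  rewrite lebesgue_measure_itv /= lte_fin; case: ifP => _; last by rewrite lee_fin.
  by rewrite -EFinB opprB addrC subrK.
suff -> : (M%:R * D)%:E = (\sum_(m < M) D%:E)%R by apply: lee_sum => m _; exact: window.
by rewrite sumEFin sumr_const card_ord mulr_natl.
Qed.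

Section DoSSequence.
Variables (R : realType) (K : option nat) (h tau : nat -> R).
Hypothesis hD : DoS_seq K h tau.

Lemma in_seq_le n m : (n <= m)%N -> in_seq K m -> in_seq K n.
Proof. by case: K => //= m' nm; apply: leq_ltn_trans. Qed.

Lemma pulse_lt n m : (n < m)%N -> in_seq K m -> h n < h m.
Proof.
have [_ [tau_ge0 h_step]] := hD.
elim: m => // m IH; rewrite ltnS => nm Sm.
have step : h m < h m.+1.
  by have := h_step m Sm; have := tau_ge0 m (in_seq_le (leqnSn m) Sm); lra.
move: nm; rewrite leq_eqVlt => /orP[/eqP -> //|nm].
exact: lt_trans (IH nm (in_seq_le (leqnSn m) Sm)) step.
Qed.

Lemma pulse_ge0 n : in_seq K n -> 0 <= h n.
Proof.
have [h0_ge0 _] := hD; case: n => [/h0_ge0//|n Sn].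
exact: le_trans (h0_ge0 (in_seq_le (leq0n _) Sn)) (ltW (pulse_lt (ltn0Sn n) Sn)).
Qed.

Lemma pulse_count_le t (B : R) n : Defs.card_le (pulse_times K h `&` `[0, t]) B ->
  in_seq K n -> h n <= t -> n.+1%:R <= B.
Proof.
move=> card_B Sn hn_t; have := card_B (map h (iota 0 n.+1)); rewrite size_map size_iota.
apply.
  rewrite map_inj_in_uniq ?iota_uniq // => j j'; rewrite !mem_iota !add0n !ltnS /= => jn j'n hjj'.
  apply/eqP; apply: contraPT hjj'; rewrite neq_ltn => /orP[] lt_jj'; apply/eqP.
    by rewrite lt_eqF // pulse_lt // (in_seq_le j'n).
  by rewrite gt_eqF // pulse_lt // (in_seq_le jn).
move=> y /mapP[j]; rewrite mem_iota add0n ltnS /= => jn ->; split.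
  by exists j => //; apply: in_seq_le jn Sn.
rewrite /= in_itv /= pulse_ge0 ?(in_seq_le jn) //=; apply: le_trans hn_t.
by move: jn; rewrite leq_eqVlt => /orP[/eqP ->//|/pulse_lt/(_ Sn)/ltW].
Qed.

Lemma Xi_measurable t : measurable (Xi K h tau 0 t).
Proof.
apply: measurableI; last exact: measurable_itv.
apply: bigcup_measurable => n _.
have -> : H_set h tau n = [set h n] `|` `[h n, h n + tau n[%classic.
  apply/seteqP; split => y /=; rewrite in_itv /=; first by case=> [->|[-> ->]]; [left|right].
  by case=> [->|/andP[]]; [left|right].
exact: measurableU (measurable_set1 _) (measurable_itv _).
Qed.

End DoSSequence.

Section AttackedSamples.
Variables (R : realType) (K : option nat) (h tau ts : nat -> R).
Variables (tcheck Dlow Dbar Bd Bf kappa : R) (Lambda : nat).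
Hypotheses (hD : DoS_seq K h tau) (ts0 : ts 0%N = 0).
Hypotheses (Dlow_gt0 : 0 < Dlow) (ts_step : forall k, Dlow <= ts k.+1 - ts k).
Hypothesis Dbar_step : forall k, tcheck <= ts k -> ts k.+1 - ts k <= Dbar.
Hypothesis Bf_ge0 : 0 <= Bf.
Hypothesis kappa_duration : forall t, 0 <= t ->
  (lebesgue_measure (Xi K h tau 0 t) <= (kappa + Bd * t)%:E)%E.
Hypothesis Lambda_frequency : forall t, 0 <= t ->
  Defs.card_le (pulse_times K h `&` `[0, t]) (Lambda%:R + Bf * t).
Variable k0 : nat.
Hypotheses (tcheck_k0 : tcheck <= ts k0) (tk0_ge0 : 0 <= ts k0).
Hypothesis attacked : forall k, (k0 <= k)%N -> Xi_all K h tau (ts k).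

Let Dbar_gt0 : 0 < Dbar.
Proof. by have := Dbar_step tcheck_k0; have := ts_step k0; have := Dlow_gt0; lra. Qed.

(* The sampling instant following [s] is attacked while [s] is not, so the attack
   covering it starts in [(s, s + Dbar]]. *)
Lemma pulse_after_unattacked s : ts k0 <= s -> ~ Xi_all K h tau s ->
  exists2 m, in_seq K m & s < h m <= s + Dbar.
Proof.
move=> k0s s_free.
have s_ge0 : ts 0 <= s by rewrite ts0; have := tk0_ge0; lra.
have [k /andP[ks sk]] := ts_bracket Dlow_gt0 ts_step s_ge0.
have k0k : (k0 <= k)%N.
  by rewrite leqNgt; apply/negP => /(ts_nondecr Dlow_gt0 ts_step); lra.
have [m Sm Hm] := attacked (leqW k0k); exists m => //.
have hm_le : h m <= ts k.+1 by case: Hm => [->|[]]; lra.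
apply/andP; split.
  rewrite ltNge; apply/negP => hm_s; apply: s_free; exists m => //; right.
  by case: Hm => [hm|[_]]; [move: sk; rewrite -hm|]; lra.
have := Dbar_step (le_trans tcheck_k0 (ts_nondecr Dlow_gt0 ts_step k0k)); lra.
Qed.

Lemma attacked_interval_length t : ts k0 < t ->
  t - ts k0 <= kappa + Bd * t + (Lambda%:R + Bf * (t + Dbar) + 1) * Dbar.
Proof.
move=> k0t; pose B := Lambda%:R + Bf * (t + Dbar); pose M := (Num.truncn B).+1.
have cover : `[ts k0, t]%classic `<=` Xi K h tau 0 t `|` pulse_windows h Dbar M.
  move=> s /=; rewrite in_itv /= => /andP[k0s st].
  have [s_att|s_free] := pselect (Xi_all K h tau s).
    by left; split => //=; rewrite in_itv /= st andbT; have := tk0_ge0; lra.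
  right; have [m Sm /andP[sm ms]] := pulse_after_unattacked k0s s_free.
  rewrite /pulse_windows -(bigcup_mkord M (fun m => `[h m - Dbar, h m[%classic)).
  exists m; last by rewrite /= in_itv /=; apply/andP; lra.
  have tD_ge0 : 0 <= t + Dbar by have := tk0_ge0; have := Dbar_gt0; lra.
  have hm_le : h m <= t + Dbar by lra.
  have := pulse_count_le hD (Lambda_frequency tD_ge0) Sm hm_le => mB.
  rewrite /= -(ltr_nat R); apply: le_lt_trans (truncnS_gt B).
  by apply: le_trans mB; rewrite ler_nat.
have mW : measurable (pulse_windows h Dbar M).
  by apply: bigsetU_measurable => m _; exact: measurable_itv.
have := le_measure lebesgue_measure (mem_set (measurable_itv `[ts k0, t]))
  (mem_set (measurableU _ _ (Xi_measurable K h tau t) mW)) cover.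
move/le_trans/(_ (measureU2 lebesgue_measure (Xi_measurable K h tau t) mW)).
move/le_trans/(_ (leeD (kappa_duration (le_trans tk0_ge0 (ltW k0t)))
  (measure_pulse_windows h M (ltW Dbar_gt0)))).
have := lebesgue_measure_itv `[ts k0, t]; rewrite /= lte_fin k0t => ->.
rewrite -EFinD lee_fin.
have : M%:R <= B + 1.
  rewrite /M -natr1 lerD2r truncn_le addr_ge0 ?mulr_ge0 //.
  by have := tk0_ge0; have := Dbar_gt0; lra.
rewrite -(ler_pM2r Dbar_gt0) /B; lra.
Qed.

End AttackedSamples.

Lemma unattacked_samples_unbounded (R : realType) (K : option nat) (h tau ts : nat -> R)
    (tcheck Dlow Dbar Bd Bf : R) :
  DoS_seq K h tau -> ts 0%N = 0 -> 0 < Dlow -> (forall k, Dlow <= ts k.+1 - ts k) ->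
  0 <= tcheck -> (forall k, tcheck <= ts k -> ts k.+1 - ts k <= Dbar) ->
  duration_bound K h tau Bd -> frequency_bound K h Bf -> Bd + Bf * Dbar < 1 ->
  forall n, exists2 k, (n <= k)%N & ~ Xi_all K h tau (ts k).
Proof.
move=> hD ts0 Dlow_gt0 ts_step tcheck_ge0 Dbar_step [_ [kappa [_ kappa_dur]]].
move=> [Bf_ge0 [Lambda [_ Lambda_freq]]] B_lt1 n; apply: contrapT => all_attacked.
have [k1 tk1] := ts_unbounded Dlow_gt0 ts_step tcheck.
pose k0 := maxn n k1.
have tcheck_k0 : tcheck <= ts k0.
  exact: le_trans (ltW tk1) (ts_nondecr Dlow_gt0 ts_step (leq_maxr n k1)).
have tk0_ge0 : 0 <= ts k0 by lra.
have attacked k : (k0 <= k)%N -> Xi_all K h tau (ts k).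
  move=> k0k; apply: contrapT => free; apply: all_attacked; exists k => //.
  exact: leq_trans (leq_maxl n k1) k0k.
have len := attacked_interval_length hD ts0 Dlow_gt0 ts_step Dbar_step Bf_ge0
  kappa_dur Lambda_freq tcheck_k0 tk0_ge0 attacked.
pose C := ts k0 + kappa + (Lambda%:R + Bf * Dbar + 1) * Dbar.
pose del := 1 - Bd - Bf * Dbar; have del_gt0 : 0 < del by rewrite /del; lra.
pose t := ts k0 + (`|C| + 1) / del.
have k0t : ts k0 < t by rewrite /t ltrDl divr_gt0 // ltr_wpDl.
have : del * t <= C by have := len t k0t; rewrite /del /C; lra.
have -> : del * t = del * ts k0 + (`|C| + 1) by rewrite /t; field; rewrite gt_eqF.
have := ler_norm C; have := mulr_ge0 (ltW del_gt0) tk0_ge0; lra.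
Qed.

(** * The sampled-data consensus dynamics *)

Lemma affine_of_const_derive (R : realType) (f : R -> R) (u a b : R) :
  {within `[a, b], continuous f} -> (forall t, a < t < b -> is_derive t 1 f u) ->
  forall t, a <= t <= b -> f t = f a + (t - a) * u.
Proof.
move=> f_cont f_der t /andP[a_t t_b].
have der s : s \in `]a, t[ -> is_derive s 1 f ((fun=> u) s).
  by rewrite in_itv /= => /andP[a_s s_t]; apply: f_der; rewrite a_s (lt_le_trans s_t).
have cont : {within `[a, t], continuous f}.
  by apply: continuous_subspaceW f_cont => s /=; rewrite !in_itv /= => /andP[-> /le_trans->].
by have [c _ /eqP] := MVT_segment a_t der cont; rewrite subr_eq addrC mulrC => /eqP.
Qed.

Lemma norm_interp_le_max (R : realType) (p q s : R) : 0 <= s <= 1 ->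
  `|p + s * (q - p)| <= Num.max `|p| `|q|.
Proof.
case/andP=> s0 s1; have -> : p + s * (q - p) = (1 - s) * p + s * q by ring.
apply: le_trans (ler_normD _ _) _; rewrite !normrM (ger0_norm s0) ger0_norm ?subr_ge0 //.
set m := Num.max `|p| `|q|; apply: le_trans (_ : _ <= (1 - s) * m + s * m) _.
  by rewrite lerD // ler_wpM2l ?subr_ge0 // le_max lexx ?orbT.
by rewrite -mulrDl subrK mul1r.
Qed.

Section SampledSignal.
Variables (R : realType) (ts : nat -> R) (Dlow : R) (f : R -> R).
Hypotheses (Dlow_gt0 : 0 < Dlow) (ts_step : forall k, Dlow <= ts k.+1 - ts k).
Hypothesis f_between : forall k t, ts k <= t <= ts k.+1 ->
  `|f t| <= Num.max `|f (ts k)| `|f (ts k.+1)|.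

Lemma cvg_pinfty_of_samples : f (ts k) @[k --> \oo] --> 0 -> f t @[t --> +oo] --> 0.
Proof.
move=> /cvgr0Pnorm_le f_ts; apply/cvgr0Pnorm_le => e e_gt0.
have [M _ fM] := f_ts e e_gt0.
exists (ts M); split; first by rewrite num_real.
move=> t Mt; have t_ge : ts 0 <= t.
  exact: le_trans (ts_nondecr Dlow_gt0 ts_step (leq0n M)) (ltW Mt).
have [k /andP[kt tk]] := ts_bracket Dlow_gt0 ts_step t_ge.
have Mk : (M <= k)%N.
  by rewrite leqNgt; apply/negP => /(ts_nondecr Dlow_gt0 ts_step); lra.
apply: le_trans (f_between (_ : ts k <= t <= ts k.+1)) _.
  by rewrite kt ltW.
by rewrite ge_max !fM //= leqW.
Qed.

End SampledSignal.

Section SampledConsensus.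
Variables (R : realType) (N : nat) (a : 'M[R]_N) (K : option nat) (h tau ts : nat -> R).
Variables (tcheck Dlow Dbar lam : R) (x : 'I_N -> R -> R).
Hypotheses (a_sym : forall i j, a i j = a j i) (a_ge0 : forall i j, 0 <= a i j).
Hypotheses (Dlow_gt0 : 0 < Dlow) (ts_step : forall k, Dlow <= ts k.+1 - ts k).
Hypothesis Dbar_step : forall k, tcheck <= ts k -> ts k.+1 - ts k <= Dbar.
Hypotheses (lam_max : max_eigenvalue (laplacian a) lam) (lam_ge0 : 0 <= lam).
Hypothesis Dbar_lam : Dbar * lam < 2.
Hypothesis x_cont : forall k i, {within `[ts k, ts k.+1], continuous (x i)}.
Hypothesis x_der : forall k i t, ts k < t < ts k.+1 ->
  is_derive t 1 (x i) (ctrl_input a K h tau x (ts k) i).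
Local Notation L := (laplacian a).
Local Notation attacked k := (Xi_all K h tau (ts k)).

Definition sample_error (c : R) k : 'rV[R]_N := \row_j (x j (ts k) - c).
Local Notation E := sample_error.

Lemma state_affine k i t : ts k <= t <= ts k.+1 ->
  x i t = x i (ts k) + (t - ts k) * ctrl_input a K h tau x (ts k) i.
Proof.
exact: affine_of_const_derive (@x_cont k i) (@x_der k i) t.
Qed.

Lemma ctrl_inputE c k i :
  ctrl_input a K h tau x (ts k) i = if `[< attacked k >] then 0 else - (E c k *m L) 0 i.
Proof.
rewrite /ctrl_input; case: ifP => // _.
by rewrite mulmx_laplacian // -sumrN; apply: eq_bigr => j _; rewrite !mxE; ring.
Qed.

Lemma sample_error_step c k :
  E c k.+1 = E c k - (if `[< attacked k >] then 0 else ts k.+1 - ts k) *: (E c k *m L).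
Proof.
apply/rowP => i.
have k_Sk : ts k <= ts k.+1 <= ts k.+1 by rewrite lexx andbT ltW // (ts_lt Dlow_gt0 ts_step).
rewrite [LHS]mxE (state_affine i k_Sk) (ctrl_inputE c) !mxE.
by case: ifP => _; ring.
Qed.

Lemma sum_ctrl_input k : \sum_i ctrl_input a K h tau x (ts k) i = 0.
Proof.
transitivity (\sum_i if `[< attacked k >] then 0 else - (E 0 k *m L) 0 i).
  by apply: eq_bigr => i _; exact: ctrl_inputE.
by case: `[< attacked k >]; rewrite ?big1_eq // sumrN sum_mulmx_laplacian ?oppr0.
Qed.

Lemma sum_state_samples k : \sum_i x i (ts k) = \sum_i x i (ts 0).
Proof.
elim: k => // k <-.
have k_Sk : ts k <= ts k.+1 <= ts k.+1 by rewrite lexx andbT ltW // (ts_lt Dlow_gt0 ts_step).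
rewrite (eq_bigr _ (fun i _ => state_affine i k_Sk)) big_split /= -mulr_sumr.
by rewrite sum_ctrl_input mulr0 addr0.
Qed.

Lemma sample_error_idle c k : attacked k -> E c k.+1 = E c k.
Proof. by move=> att; rewrite sample_error_step asboolT // scale0r subr0. Qed.

Lemma sample_error_descent c k : tcheck <= ts k -> ~ attacked k ->
  sqnorm (E c k.+1) <= sqnorm (E c k) - Dlow * (2 - Dbar * lam) * qform L (E c k).
Proof.
move=> k_late free; rewrite sample_error_step asboolF //.
apply: le_trans (sqnorm_laplacian_step a_sym a_ge0 _ _ lam_max) _.
rewrite lerD2l lerN2 ler_wpM2r ?laplacian_form_ge0 //.
have := ts_step k; have := Dbar_step k_late; move: (ts k.+1 - ts k) => d dD Dd.
have dlam : 0 <= 2 - d * lam.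
  by have := ler_wpM2r lam_ge0 dD; have := Dbar_lam; lra.
have : 0 <= Dlow * ((Dbar - d) * lam) by rewrite !mulr_ge0 ?subr_ge0 // ltW.
have : 0 <= (d - Dlow) * (2 - d * lam) by rewrite mulr_ge0 // subr_ge0.
lra.
Qed.

Lemma sample_error_form_cvg0 c : (forall n, exists2 k, (n <= k)%N & ~ attacked k) ->
  qform L (E c k) @[k --> \oo] --> 0.
Proof.
move=> free_inf; have [k1 tk1] := ts_unbounded Dlow_gt0 ts_step tcheck.
have late k : (k1 <= k)%N -> tcheck <= ts k.
  by move=> k1k; apply: le_trans (ltW tk1) (ts_nondecr Dlow_gt0 ts_step k1k).
apply: (descent_cvg0 (V := fun k => sqnorm (E c k)) (act := fun k => ~ attacked k) (k1 := k1)
  (gam := Dlow * (2 - Dbar * lam))) => //.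
- by rewrite mulr_gt0 // subr_gt0.
- by move=> k; exact: sqnorm_ge0.
- by move=> k; exact: laplacian_form_ge0.
- by move=> k /late; exact: sample_error_descent.
- by move=> k _ /contrapT /sample_error_idle ->.
Qed.

Lemma state_interp c k i t : ts k <= t <= ts k.+1 ->
  `|x i t - c| <= Num.max `|x i (ts k) - c| `|x i (ts k.+1) - c|.
Proof.
move=> kt; have k_Sk : ts k <= ts k.+1 <= ts k.+1.
  by rewrite lexx andbT ltW // (ts_lt Dlow_gt0 ts_step).
have Dk_gt0 := ts_lt Dlow_gt0 ts_step k.
rewrite (state_affine i kt) (state_affine i k_Sk).
set u := ctrl_input _ _ _ _ _ _ _.
have -> : x i (ts k) + (t - ts k) * u - c =
    (x i (ts k) - c) + (t - ts k) / (ts k.+1 - ts k) *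
      ((x i (ts k) + (ts k.+1 - ts k) * u - c) - (x i (ts k) - c)).
  by field; rewrite subr_eq0 gt_eqF.
apply: norm_interp_le_max; case/andP: kt => kt tk; apply/andP; split.
  by rewrite divr_ge0 // subr_ge0 // ltW.
by rewrite ler_pdivrMr ?subr_gt0 // mul1r lerD2r.
Qed.

End SampledConsensus.

Theorem lemma3 (R : realType) (N : nat) (a : 'M[R]_N)
  (K : option nat) (h tau : nat -> R)
  (ts : nat -> R) (tcheck Dlow Dbar lamN Bd Bf : R)
  (x : 'I_N -> R -> R) :
  (forall i j, a i j = 0 \/ a i j = 1) ->
  (laplacian a)^T = laplacian a ->
  irreducible_mx (laplacian a) ->
  max_eigenvalue (laplacian a) lamN ->
  DoS_seq K h tau ->
  ~ edge_case K h tau ->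
  ts 0%N = 0 ->
  0 < Dlow ->
  (forall k, Dlow <= ts k.+1 - ts k) ->
  0 <= tcheck ->
  (forall k, tcheck <= ts k -> ts k.+1 - ts k <= Dbar) ->
  `|1 - Dbar * lamN| < 1 ->
  duration_bound K h tau Bd ->
  frequency_bound K h Bf ->
  Bd + Bf * Dbar < 1 ->
  (forall k i, {within `[ts k, ts k.+1], continuous (x i)}) ->
  (forall k i t, ts k < t < ts k.+1 ->
     is_derive t 1 (x i) (ctrl_input a K h tau x (ts k) i)) ->
  forall i : 'I_N,
    (x i t - (\sum_(j < N) x j 0) / N%:R) @[t --> +oo] --> 0.
Proof.
(* The exclusion of edge cases is not needed. *)
move=> a01 Lsym a_irr lam_max hD _ ts0 Dlow_gt0 ts_step tcheck_ge0 Dbar_step lam_ok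
  dur freq B_lt1 x_cont x_der i.
have a_sym := laplacian_sym_adj Lsym.
have a_ge0 j j' : 0 <= a j j' by case: (a01 j j') => ->.
have [lam_gt0 Dbar_lam] : 0 < lamN /\ Dbar * lamN < 2.
  have [k1 /ltW tk1] := ts_unbounded Dlow_gt0 ts_step tcheck.
  have Dbar_gt0 : 0 < Dbar by have := Dbar_step k1 tk1; have := ts_step k1; lra.
  move: lam_ok; rewrite ltr_norml => /andP[? ?]; split; last lra.
  by rewrite -(pmulr_rgt0 _ Dbar_gt0); lra.
pose c := (\sum_(j < N) x j 0) / N%:R; pose E := sample_error ts x c.
have E_sum0 k : \sum_j E k 0 j = 0.
  under eq_bigr do rewrite mxE.
  rewrite sumrB (sum_state_samples a_sym Dlow_gt0 ts_step x_cont x_der) ts0.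
  rewrite sumr_const card_ord -mulr_natr /c divfK ?subrr //.
  by rewrite pnatr_eq0 -lt0n (leq_ltn_trans (leq0n _) (ltn_ord i)).
have free_inf := unattacked_samples_unbounded hD ts0 Dlow_gt0 ts_step tcheck_ge0
  Dbar_step dur freq B_lt1.
have Q_cvg0 := sample_error_form_cvg0 a_sym a_ge0 Dlow_gt0 ts_step Dbar_step lam_max
  (ltW lam_gt0) Dbar_lam x_cont x_der c free_inf.
have E_cvg0 := laplacian_consensus_cvg0 a_sym a_ge0 a_irr E_sum0 Q_cvg0 i.
apply: (cvg_pinfty_of_samples Dlow_gt0 ts_step
  (fun k => state_interp Dlow_gt0 ts_step x_cont x_der c (k := k) i)).
by apply: cvg_trans E_cvg0; apply: near_eq_cvg; near=> k; rewrite mxE.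
Unshelve. all: by end_near.
Qed.
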